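(* Let $k\ge1$ and let $\Gamma\subset\mathbb{R}_+^k$ be a nonempty compact set of possible allocations. For every random valuation $X$ with values in $\mathbb{R}_+^k$ and finite expectation ($\mathbb{E}\|X\|<\infty$) there exists an allocation-monotonic (incentive compatible and individually rational) $\Gamma$-mechanism $\mu$ with $R(\mu;X)=\textsc{AMonRev}_\Gamma(X)$.
   Context: A $\Gamma$-mechanism $\mu=(q,s)$ consists of $q:\mathbb{R}_+^k\to\Gamma$ and $s:\mathbb{R}_+^k\to\mathbb{R}$; it is IC if $q(x)\cdot x-s(x)\ge q(y)\cdot x-s(y)$ for all $x,y\in\mathbb{R}_+^k$, and IR if $q(x)\cdot x-s(x)\ge0$ for all $x\in\mathbb{R}_+^k$. It is allocation monotonic if $q(y)\ge q(x)$ (coordinatewise) whenever $y\ge x$ (coordinatewise) in $\mathbb{R}_+^k$. The revenue is $R(\mu;X):=\mathbb{E}[s(X)]$, and $\textsc{AMonRev}_\Gamma(X)$ is the supremum of $R(\mu;X)$ over all allocation-monotonic IC and IR $\Gamma$-mechanisms $\mu$. *)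

From HB Require Import structures.
From mathcomp Require Import all_boot all_order all_algebra.
From mathcomp Require Import all_classical all_reals all_analysis.
Set Implicit Arguments. Unset Strict Implicit. Unset Printing Implicit Defensive.
Import Order.TTheory GRing.Theory Num.Theory.
Import numFieldNormedType.Exports.
Local Open Scope classical_set_scope.
Local Open Scope ring_scope.

Definition orthant (R : realType) (k : nat) : set 'rV[R]_k :=
  [set x | forall i : 'I_k, 0 <= x ord0 i].

Definition vle (R : realType) (k : nat) (x y : 'rV[R]_k) : Prop :=
  forall i : 'I_k, x ord0 i <= y ord0 i.

Definition dotv (R : realType) (k : nat) (q x : 'rV[R]_k) : R :=
  \sum_(i < k) q ord0 i * x ord0 i.

Definition is_mechanism (R : realType) (k : nat) (Gamma : set 'rV[R]_k)
  (q : 'rV[R]_k -> 'rV[R]_k) (s : 'rV[R]_k -> R) : Prop :=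
  forall x, orthant x -> Gamma (q x).

Definition IC (R : realType) (k : nat)
  (q : 'rV[R]_k -> 'rV[R]_k) (s : 'rV[R]_k -> R) : Prop :=
  forall x y, orthant x -> orthant y ->
    dotv (q x) x - s x >= dotv (q y) x - s y.

Definition IR (R : realType) (k : nat)
  (q : 'rV[R]_k -> 'rV[R]_k) (s : 'rV[R]_k -> R) : Prop :=
  forall x, orthant x -> dotv (q x) x - s x >= 0.

Definition alloc_monotonic (R : realType) (k : nat)
  (q : 'rV[R]_k -> 'rV[R]_k) : Prop :=
  forall x y, orthant x -> orthant y -> vle x y -> vle (q x) (q y).

Definition revenue (R : realType) (d : measure_display) (Omega : measurableType d)
  (P : probability Omega R) (k : nat) (X : Omega -> 'rV[R]_k)
  (s : 'rV[R]_k -> R) : \bar R :=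
  (\int[P]_w (s (X w))%:E)%E.

(* Admissible mechanisms for AMonRev: allocation-monotonic IC IR Gamma-mechanisms
   whose payment s(X) is a random variable (so that E[s(X)] makes sense). *)
Definition amon_admissible (R : realType) (d : measure_display) (Omega : measurableType d)
  (k : nat) (Gamma : set 'rV[R]_k) (X : Omega -> 'rV[R]_k)
  (q : 'rV[R]_k -> 'rV[R]_k) (s : 'rV[R]_k -> R) : Prop :=
  [/\ is_mechanism Gamma q s, IC q s, IR q s, alloc_monotonic q
    & measurable_fun setT (fun w => s (X w))].

Definition AMonRev (R : realType) (d : measure_display) (Omega : measurableType d)
  (P : probability Omega R) (k : nat) (Gamma : set 'rV[R]_k)
  (X : Omega -> 'rV[R]_k) : \bar R :=
  ereal_sup [set revenue P X s | s in
     [set s | exists q, amon_admissible Gamma X q s]].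

(* Normalizing payments so that s(0) = 0 keeps a mechanism admissible, does
   not lower its revenue (IR forces s(0) <= 0), and makes the payments lie
   between 0 and B * sum_i x_i, where B bounds the coordinates of Gamma;
   hence AMonRev is finite and approached by normalized admissible
   mechanisms (q_n, s_n).  On the countable set of dyadic points all values
   q_n(y), s_n(y) are bounded, so a diagonal subsequence converges there, and
   the limits still satisfy IC, IR, monotonicity and take values in the
   closed set Gamma.  At an arbitrary x we take the limit along the dyadic
   upper roundings of x, which decrease to x: by monotonicity these limits
   exist and the constraints pass to them.  Since payments are monotone,
   s_n(X) <= s_n(ceil_m X), so two dominated convergence steps (first in n
   for fixed m, where ceil_m X only takes dyadic values, then in m) show that
   the limit mechanism earns at least AMonRev. *)

From HB Require Import structures.
From mathcomp Require Import all_boot all_order all_algebra.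
From mathcomp Require Import all_classical all_reals all_analysis.
From mathcomp Require Import measurable_realfun lra.
Import Order.TTheory GRing.Theory Num.Theory.
Import numFieldNormedType.Exports.
Local Open Scope classical_set_scope.
Local Open Scope ring_scope.

Set Implicit Arguments. Unset Strict Implicit. Unset Printing Implicit Defensive.

Section diagonal_extraction.
Variable R : realType.

Lemma increasing_seq_ge (f : nat -> nat) : increasing_seq f -> forall n, (n <= f n)%N.
Proof.
by move=> /increasing_seqP f_lt; elim=> // n IH; apply: leq_ltn_trans IH (f_lt n).
Qed.

Fixpoint iter_extract (E : (nat -> nat) -> nat -> nat -> nat) (j : nat) : nat -> nat :=
  if j is j.+1 then iter_extract E j \o E (iter_extract E j) j else id.

Lemma iter_extractD (E : (nat -> nat) -> nat -> nat -> nat) :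
  (forall phi j n, (n <= E phi j n)%N) ->
  forall j m n, exists2 t, (n <= t)%N & iter_extract E (j + m) n = iter_extract E j t.
Proof.
move=> E_ge j; elim=> [|m IH] n; first by exists n; rewrite ?addn0.
rewrite addnS /=.
have [t nt ->] := IH (E (iter_extract E (j + m)) (j + m) n).
by exists t; rewrite // (leq_trans (E_ge _ _ _) nt).
Qed.

Lemma diagonal_extraction_nat (a : nat -> nat -> R) :
  (forall j, exists M, forall n, `|a j n| <= M) ->
  exists2 psi : nat -> nat, (forall n, (n <= psi n)%N) &
    forall j, cvgn (fun n => a j (psi n)).
Proof.
move=> a_bnd.
have extract phi j : exists f : nat -> nat,
    (forall n, (n <= f n)%N) /\ cvgn (fun n => a j (phi (f n))).
  have [M aM] := a_bnd j.
  have : bounded_fun (fun n => a j (phi n)).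
    exists M; split; first exact: num_real.
    by move=> x Mx y _ /=; apply: le_trans (aM _) (ltW _).
  by move=> /bolzano_weierstrass [f /increasing_seq_ge f_ge f_cvg]; exists f.
pose E phi j := projT1 (cid (extract phi j)).
have E_ge phi j n : (n <= E phi j n)%N by rewrite /E; case: cid => f [].
have E_cvg j : cvgn (fun n => a j (iter_extract E j.+1 n)).
  by rewrite /E /=; case: cid => f [].
exists (fun n => iter_extract E n.+1 n).
  by move=> n; have [t nt] := iter_extractD E_ge 0 n.+1 n; rewrite add0n => ->.
move=> j; have /cvg_ex [l jl] := E_cvg j.
apply/cvg_ex; exists l => U /jl [N _ NU].
exists (maxn N j.+1) => // n /=; rewrite geq_max => /andP [Nn jn].
have := iter_extractD E_ge j.+1 (n.+1 - j.+1) n.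
rewrite subnKC ?(leqW jn) // => -[t nt /= ->].
by apply: NU; rewrite /= (leq_trans Nn nt).
Qed.

Lemma diagonal_extraction (I : countType) (a : I -> nat -> R) :
  (forall i, exists M, forall n, `|a i n| <= M) ->
  exists2 psi : nat -> nat, (forall n, (n <= psi n)%N) &
    forall i, cvgn (fun n => a i (psi n)).
Proof.
move=> a_bnd; pose b j n := if @unpickle I j is Some i then a i n else 0.
have [|psi psi_ge b_cvg] := @diagonal_extraction_nat b.
  by move=> j; rewrite /b; case: unpickle => [i|]; last by exists 0 => n; rewrite normr0.
by exists psi => // i; have := b_cvg (pickle i); rewrite /b pickleK.
Qed.

End diagonal_extraction.

Section dyadic_ceil.
Variable R : archiRealFieldType.
Implicit Types (a b : R) (m : nat).

Definition dyadic_ceil m a : R := (Num.truncn (a * 2%:R ^+ m)).+1%:R / 2%:R ^+ m.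

Let pow2_gt0 m : 0 < (2%:R : R) ^+ m.
Proof. by rewrite exprn_gt0. Qed.

Let truncn_pow2_itv m a : 0 <= a ->
  (Num.truncn (a * 2%:R ^+ m))%:R <= a * 2%:R ^+ m < (Num.truncn (a * 2%:R ^+ m)).+1%:R.
Proof. by move=> a0; apply/truncn_itv/mulr_ge0/ltW. Qed.

Lemma dyadic_ceil_gt m a : 0 <= a -> a < dyadic_ceil m a.
Proof. by move=> /(truncn_pow2_itv m) /andP[_]; rewrite ltr_pdivlMr. Qed.

Lemma dyadic_ceil_le m a : 0 <= a -> dyadic_ceil m a <= a + (2%:R ^+ m)^-1.
Proof.
move=> /(truncn_pow2_itv m) /andP[le_trunc _].
by rewrite ler_pdivrMr // mulrDl mulVf ?gt_eqF // -natr1 lerD2r.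
Qed.

Lemma dyadic_ceil_le1 m a : 0 <= a -> dyadic_ceil m a <= a + 1.
Proof.
move=> a0; apply: le_trans (dyadic_ceil_le m a0) _.
by rewrite lerD2l invf_le1 // exprn_ege1 // ler1n.
Qed.

Lemma dyadic_ceilS m a : 0 <= a -> dyadic_ceil m.+1 a <= dyadic_ceil m a.
Proof.
move=> a0; rewrite /dyadic_ceil.
set t := Num.truncn (a * 2%:R ^+ m); set t' := Num.truncn (a * 2%:R ^+ m.+1).
have t't : (t'.+1 <= 2 * t.+1)%N.
  rewrite -(ltr_nat R); have /andP[le_t' _] := truncn_pow2_itv m.+1 a0.
  apply: le_lt_trans le_t' _; have /andP[_ lt_t] := truncn_pow2_itv m a0.
  by rewrite exprS mulrCA natrM ltr_pM2l.
rewrite ler_pdivrMr //.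
suff -> : t.+1%:R / 2%:R ^+ m * 2%:R ^+ m.+1 = (2 * t.+1)%N%:R :> R by rewrite ler_nat.
by rewrite exprS natrM mulrCA divfK ?gt_eqF.
Qed.

Lemma nonincreasing_dyadic_ceil a : 0 <= a -> nonincreasing_seq (fun m => dyadic_ceil m a).
Proof. by move=> a0; apply/nonincreasing_seqP => m; apply: dyadic_ceilS. Qed.

Lemma dyadic_ceil_homo m a b : 0 <= a -> a <= b -> dyadic_ceil m a <= dyadic_ceil m b.
Proof.
move=> a0 ab; rewrite /dyadic_ceil ler_pM2r ?invr_gt0 // ler_nat ltnS.
by apply: le_truncn; rewrite ler_pM2r.
Qed.

End dyadic_ceil.

Lemma cvg_dyadic_ceil (R : realType) (a : R) :
  0 <= a -> (fun m => dyadic_ceil m a) @ \oo --> a.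
Proof.
move=> a0; apply: (@squeeze_cvgr _ _ _ _ (cst a) (fun m => a + (2%:R^-1) ^+ m)).
- by near=> m; rewrite (ltW (dyadic_ceil_gt m a0)) /= exprVn dyadic_ceil_le.
- exact: cvg_cst.
- rewrite -[X in _ --> X]addr0; apply: cvgD; first exact: cvg_cst.
  by apply: cvg_expr; rewrite ger0_norm ?invr_ge0 // invf_lt1 // ltr1n.
Unshelve. all: by end_near. Qed.

Section dyadic_ceilv.
Variables (R : realType) (k : nat).
Implicit Types (x y : 'rV[R]_k) (m : nat).

Definition dyadic_point m (z : {ffun 'I_k -> nat}) : 'rV[R]_k :=
  \row_i ((z i).+1%:R / 2%:R ^+ m).

Definition dyadic_index m x : {ffun 'I_k -> nat} :=
  [ffun i => Num.truncn (x ord0 i * 2%:R ^+ m)].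

Definition dyadic_ceilv m x := dyadic_point m (dyadic_index m x).

Lemma dyadic_ceilvE m x i : dyadic_ceilv m x ord0 i = dyadic_ceil m (x ord0 i).
Proof. by rewrite /dyadic_ceilv /dyadic_point mxE ffunE. Qed.

Lemma orthant_dyadic_point m z : orthant (dyadic_point m z).
Proof. by move=> i; rewrite mxE divr_ge0 // exprn_ge0. Qed.

Lemma vle_dyadic_ceilv m x : orthant x -> vle x (dyadic_ceilv m x).
Proof. by move=> x0 i; rewrite dyadic_ceilvE ltW // dyadic_ceil_gt. Qed.

Lemma dyadic_ceilv_nonincr m n x : orthant x -> (m <= n)%N ->
  vle (dyadic_ceilv n x) (dyadic_ceilv m x).
Proof.
by move=> x0 mn i; rewrite !dyadic_ceilvE; apply: nonincreasing_dyadic_ceil.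
Qed.

Lemma dyadic_ceilv_homo m x y : orthant x -> vle x y ->
  vle (dyadic_ceilv m x) (dyadic_ceilv m y).
Proof. by move=> x0 xy i; rewrite !dyadic_ceilvE dyadic_ceil_homo. Qed.

Lemma cvg_dyadic_ceilv x i : orthant x ->
  (fun m => dyadic_ceilv m x ord0 i) @ \oo --> x ord0 i.
Proof. by move=> x0; under eq_fun do rewrite dyadic_ceilvE; apply: cvg_dyadic_ceil. Qed.

Lemma measurable_fun_dyadic_index d d' (T : measurableType d) (T' : measurableType d')
    (X : T -> 'rV[R]_k) m (h : {ffun 'I_k -> nat} -> T') :
  (forall i, measurable_fun setT (fun w => X w ord0 i)) -> (forall w, orthant (X w)) ->
  measurable_fun setT (fun w => h (dyadic_index m (X w))).
Proof.
move=> mX X0 _ B mB; rewrite setTI.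
pose F j := if @unpickle {ffun 'I_k -> nat} j is Some z then
  if pselect (B (h z)) is left _ then [set w | dyadic_index m (X w) = z] else set0
  else set0.
have -> : (fun w => h (dyadic_index m (X w))) @^-1` B = \bigcup_j F j.
  apply/seteqP; split => w /=.
    move=> Bw; exists (pickle (dyadic_index m (X w))) => //.
    by rewrite /F pickleK; case: pselect.
  by case=> j _; rewrite /F; case: unpickle => // z; case: pselect => // Bz ->.
apply: bigcupT_measurable => j; rewrite /F.
case: unpickle => [z|//]; case: pselect => _ //.
have p0 : 0 < (2%:R : R) ^+ m by rewrite exprn_gt0.
suff -> : [set w | dyadic_index m (X w) = z] = \bigcap_(i in setT)
    (setT `&` (fun w => X w ord0 i) @^-1` `[(z i)%:R / 2%:R ^+ m, (z i).+1%:R / 2%:R ^+ m[).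
  apply: fin_bigcap_measurable; first exact: finite_finset.
  by move=> i _; apply: mX => //; exact: measurable_itv.
apply/seteqP; split => w /=.
  move=> <- i _; split => //=; rewrite ffunE in_itv /=.
  have /andP[lo hi] := truncn_itv (mulr_ge0 (X0 w i) (ltW p0)).
  by rewrite ler_pdivrMr // ltr_pdivlMr // lo hi.
move=> Xw; apply/ffunP => i; rewrite ffunE.
have [_ /=] := Xw i Logic.I; rewrite in_itv /= => /andP[lo hi].
by apply: truncn_def; rewrite -ler_pdivrMr // -ltr_pdivlMr // lo hi.
Qed.

End dyadic_ceilv.

Section rV_topology.
Variables (R : realType) (k : nat).

Lemma cvg_rV (v : nat -> 'rV[R]_k) (l : 'rV[R]_k) :
  (forall i, (fun n => v n ord0 i) @ \oo --> l ord0 i) -> v @ \oo --> l.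
Proof.
move=> vl; apply/cvg_mx_entourageP => A entA.
apply: filter_forall => i; apply: filter_forall => j; rewrite (ord1 i).
have : \forall n \near \oo, A (l ord0 j, v n ord0 j).
  exact: (cvg_entourageP _ _).1 (vl j) A entA.
by apply: filterS => n /mem_set.
Qed.

Lemma closed_cvg_rV (G : set 'rV[R]_k) (v : nat -> 'rV[R]_k) (l : 'rV[R]_k) :
  closed G -> (forall n, G (v n)) ->
  (forall i, (fun n => v n ord0 i) @ \oo --> l ord0 i) -> G l.
Proof. by move=> cG Gv vl; apply: closed_cvg (cvg_rV vl) => //; apply: nearW. Qed.

Lemma cvg_dotv (a b : nat -> 'rV[R]_k) (la lb : 'rV[R]_k) :
  (forall i, (fun n => a n ord0 i) @ \oo --> la ord0 i) ->
  (forall i, (fun n => b n ord0 i) @ \oo --> lb ord0 i) ->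
  (fun n => dotv (a n) (b n)) @ \oo --> dotv la lb.
Proof.
move=> al bl; have addr_cont : continuous (fun x : R * R => x.1 + x.2).
  by move=> [x y]; apply: continuousD; [exact: cvg_fst|exact: cvg_snd].
exact: (@cvg_big R 'I_k +%R 0 xpredT addr_cont nat \oo (index_enum 'I_k)
  (fun i n => a n ord0 i * b n ord0 i) (fun i => la ord0 i * lb ord0 i) _
  (fun i _ => cvgM (al i) (bl i))).
Qed.

Lemma compact_coord_bounded (G : set 'rV[R]_k) :
  compact G -> exists2 B, 0 <= B & forall g, G g -> forall i, g ord0 i <= B.
Proof.
move=> /compact_bounded [M [_ GM]]; exists (`|M| + 1); first exact: addr_ge0.
move=> g Gg i; have /GM /(_ _ Gg) : M < `|M| + 1.
  by apply: le_lt_trans (ler_norm M) _; rewrite ltrDl.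
apply: le_trans; apply: le_trans (ler_norm _) _.
rewrite [leRHS]mx_normrE.
exact: (le_bigmax _ (fun ij : 'I_1 * 'I_k => `|g ij.1 ij.2|) (ord0, i)).
Qed.

End rV_topology.

Lemma ler_cvgn (R : realType) (u v : nat -> R) (a b : R) :
  u @ \oo --> a -> v @ \oo --> b -> (forall n, u n <= v n) -> a <= b.
Proof. by move=> ua vb uv; apply: ler_cvg_to ua vb _; apply: nearW. Qed.

Section integration.
Variables (R : realType) (d : measure_display) (T : measurableType d).

Lemma le_integral_dominated_cvg (mu : {measure set T -> \bar R})
    (F : nat -> T -> R) (f g : T -> R) (c : nat -> R) (a : R) :
  (forall n, measurable_fun setT (F n)) ->
  (forall w, (fun n => F n w) @ \oo --> f w) ->
  mu.-integrable setT (fun w => (g w)%:E) ->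
  (forall n w, 0 <= F n w <= g w) ->
  (forall n, ((c n)%:E <= \int[mu]_w (F n w)%:E)%E) ->
  c @ \oo --> a -> (a%:E <= \int[mu]_w (f w)%:E)%E.
Proof.
move=> mF Ff gint Fg cF ca.
have EFin_cvg (u : nat -> R) l : u @ \oo --> l -> (fun n => (u n)%:E) @ \oo --> l%:E.
  by move=> ul; apply: cvg_EFin ul; apply: nearW.
have := @dominated_cvg _ _ _ mu setT measurableT (fun n w => (F n w)%:E)
  (fun w => (f w)%:E) (fun w => (g w)%:E).
move=> /(_ _ _ _ gint) Fint_cvg.
apply: lee_cvg_to (EFin_cvg _ _ ca) (Fint_cvg _ _ _ _) _; last exact: nearW.
- by move=> n; apply/measurable_EFinP.
- by move=> w _; apply: EFin_cvg.
- by [].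
- by move=> n w _; have /andP[F0 Fg'] := Fg n w; rewrite lee_fin ger0_norm.
Qed.

Variables (k : nat) (mu : {finite_measure set T -> \bar R}) (X : T -> 'rV[R]_k).
Hypothesis mX : forall i, measurable_fun setT (fun w => X w ord0 i).
Hypothesis Xint : (\int[mu]_w (`|X w|)%:E < +oo)%E.

Let rV_normE (x : 'rV[R]_k) : `|x| = \big[Num.max/0]_ij `|x ij.1 ij.2|.
Proof. exact: mx_normrE. Qed.

Lemma measurable_fun_rV_norm : measurable_fun setT (fun w => `|X w|).
Proof.
under eq_fun do rewrite rV_normE.
elim: (index_enum _) => [|ij r IH].
  by under eq_fun do rewrite big_nil; exact: measurable_cst.
under eq_fun do rewrite big_cons.
apply: measurable_maxr IH; rewrite (ord1 ij.1).
exact: measurableT_comp (mX _).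
Qed.

Lemma integrable_coord i : mu.-integrable setT (fun w => (X w ord0 i)%:E).
Proof.
apply/integrableP; split; first exact/measurable_EFinP.
apply: le_lt_trans Xint; apply: ge0_le_integral => //.
- by apply/measurable_EFinP; apply: measurableT_comp.
- exact/measurable_EFinP/measurable_fun_rV_norm.
- move=> w _; rewrite lee_fin.
  by rewrite rV_normE (le_bigmax _ (fun ij : 'I_1 * 'I_k => `|X w ij.1 ij.2|) (ord0, i)).
Qed.

Lemma integrable_scaled_coord_sum (B : R) :
  mu.-integrable setT (fun w => (B * \sum_(i < k) (X w ord0 i + 1))%:E).
Proof.
under eq_fun do rewrite EFinM -sumEFin.
apply: integrableZl => //; apply: integrable_sum => // i _.
under eq_fun do rewrite EFinD.
by apply: integrableD => //; [exact: integrable_coord|exact: finite_measure_integrable_cst].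
Qed.

End integration.

Section mechanisms.
Variables (R : realType) (k : nat).
Implicit Types (x y g : 'rV[R]_k) (q : 'rV[R]_k -> 'rV[R]_k) (s : 'rV[R]_k -> R).

Lemma orthant0 : orthant (0 : 'rV[R]_k).
Proof. by move=> i; rewrite mxE. Qed.

Lemma dotv0 g : dotv g 0 = 0.
Proof. by apply: big1 => i _; rewrite mxE mulr0. Qed.

Lemma dotv_ge0 g x : orthant g -> orthant x -> 0 <= dotv g x.
Proof. by move=> g0 x0; apply: sumr_ge0 => i _; apply: mulr_ge0. Qed.

Lemma dotv_homo g g' x : orthant x -> vle g g' -> dotv g x <= dotv g' x.
Proof. by move=> x0 gg'; apply: ler_sum => i _; apply: ler_wpM2r. Qed.

Lemma dotv_le_sum (B : R) g x : (forall i, g ord0 i <= B) -> orthant x ->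
  dotv g x <= B * \sum_(i < k) x ord0 i.
Proof. by move=> gB x0; rewrite mulr_sumr; apply: ler_sum => i _; apply: ler_wpM2r. Qed.

Lemma payment_mono q s x y : IC q s -> alloc_monotonic q ->
  orthant x -> orthant y -> vle x y -> s x <= s y.
Proof.
move=> qsIC q_mono x0 y0 xy.
have := qsIC x y x0 y0; have := dotv_homo x0 (q_mono x y x0 y0 xy); lra.
Qed.

Lemma payment_ge0 q s x : IC q s -> alloc_monotonic q -> s 0 = 0 ->
  orthant x -> 0 <= s x.
Proof.
move=> qsIC q_mono s0 x0; rewrite -s0.
by apply: (payment_mono qsIC q_mono orthant0 x0) => i; rewrite mxE; apply: x0.
Qed.

Lemma IR_payment0_le0 q s : IR q s -> s 0 <= 0.
Proof. by move=> /(_ 0 orthant0); rewrite dotv0 sub0r oppr_ge0. Qed.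

Definition normalize_payment s x := s x - s 0.

Lemma normalize_payment0 s : normalize_payment s 0 = 0.
Proof. exact: subrr. Qed.

Variable Gamma : set 'rV[R]_k.
Hypothesis Gamma_orthant : Gamma `<=` orthant (k:=k).

Lemma normalize_payment_IC q s : IC q s -> IC q (normalize_payment s).
Proof.
by move=> qsIC x y x0 y0; have := qsIC x y x0 y0; rewrite /normalize_payment; lra.
Qed.

Lemma normalize_payment_IR q s : is_mechanism Gamma q s -> IC q s ->
  IR q (normalize_payment s).
Proof.
move=> q_Gamma qsIC x x0; have := qsIC x 0 x0 orthant0.
have := dotv_ge0 (Gamma_orthant (q_Gamma _ orthant0)) x0.
rewrite /normalize_payment; lra.
Qed.

Variable B : R.
Hypothesis Gamma_le : forall g, Gamma g -> forall i, g ord0 i <= B.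

Lemma payment_le q s x : is_mechanism Gamma q s -> IR q s -> orthant x ->
  s x <= B * \sum_(i < k) x ord0 i.
Proof.
move=> q_Gamma qsIR x0.
apply: le_trans (dotv_le_sum (Gamma_le (q_Gamma x x0)) x0).
by rewrite -subr_ge0; apply: qsIR.
Qed.

End mechanisms.

Section optimal_mechanism.
Variables (R : realType) (k : nat) (Gamma : set 'rV[R]_k).
Hypothesis Gamma_orthant : Gamma `<=` orthant (k:=k).
Variable B : R.
Hypothesis B0 : 0 <= B.
Hypothesis Gamma_le : forall g, Gamma g -> forall i, g ord0 i <= B.
Variables (d : measure_display) (Omega : measurableType d) (P : probability Omega R).
Variable X : Omega -> 'rV[R]_k.
Hypothesis mX : forall i, measurable_fun setT (fun w => X w ord0 i).
Hypothesis X0 : forall w, orthant (X w).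
Hypothesis Xint : (\int[P]_w (`|X w|)%:E < +oo)%E.

Let dominator w := B * \sum_(i < k) (X w ord0 i + 1).

Let dominator_int : P.-integrable setT (fun w => (dominator w)%:E).
Proof. exact: integrable_scaled_coord_sum. Qed.

Lemma admissible_normalize_payment q s : amon_admissible Gamma X q s ->
  amon_admissible Gamma X q (normalize_payment s).
Proof.
move=> [q_Gamma qsIC qsIR q_mono ms]; split => //.
- exact: normalize_payment_IC.
- exact (normalize_payment_IR Gamma_orthant q_Gamma qsIC).
- by apply: measurable_funB => //; apply: measurable_cst.
Qed.

Lemma revenue_normalize_payment q s : amon_admissible Gamma X q s ->
  (revenue P X s <= revenue P X (normalize_payment s) <= \int[P]_w (dominator w)%:E)%E.
Proof.
move=> qs_adm; have [q_Gamma qsIC qsIR q_mono ms] := qs_adm.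
have [s'_Gamma s'IC s'IR _ ms'] := admissible_normalize_payment qs_adm.
set s' := normalize_payment s in s'_Gamma s'IC s'IR ms' *.
have s'0 x : orthant x -> 0 <= s' x.
  exact: payment_ge0 s'IC q_mono (normalize_payment0 s).
have s'_le w : s' (X w) <= dominator w.
  apply: le_trans (payment_le Gamma_le s'_Gamma s'IR (X0 w)) _.
  by rewrite /dominator ler_wpM2l // ler_sum // => i _; rewrite lerDl.
have s'int : P.-integrable setT (fun w => (s' (X w))%:E).
  apply: le_integrable dominator_int => //; first exact/measurable_EFinP.
  move=> w _; have := le_trans (s'0 _ (X0 w)) (s'_le w).
  by move=> dom0; rewrite !gee0_abs ?lee_fin ?s'_le ?s'0.
have sint : P.-integrable setT (fun w => (s (X w))%:E).
  apply: (eq_integrable _ (fun w => (s' (X w))%:E + (EFin \o cst (s 0)) w)) => //.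
    by move=> w _ /=; rewrite -EFinD /s' /normalize_payment subrK.
  by apply: integrableD => //; apply: finite_measure_integrable_cst.
apply/andP; split.
  apply: le_integral => // w _.
  by rewrite lee_fin /s' /normalize_payment lerDl oppr_ge0 (IR_payment0_le0 qsIR).
apply: ge0_le_integral => //.
- by move=> w _; rewrite lee_fin s'0.
- exact/measurable_EFinP.
- by case/integrableP: dominator_int.
- by move=> w _; rewrite lee_fin s'_le.
Qed.

Hypothesis Gamma_neq0 : Gamma !=set0.

Lemma AMonRev_ge0 : (0 <= AMonRev P Gamma X)%E.
Proof.
have [g Gg] := Gamma_neq0.
have <- : revenue P X (fun _ => 0) = 0%E by rewrite /revenue integral0_eq.
apply: ereal_sup_ubound; exists (fun _ => 0) => //; exists (fun _ => g); split => //.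
- by move=> x x0; rewrite subr0; apply: dotv_ge0 => //; apply: Gamma_orthant.
- by move=> x y _ _ _ i.
Qed.

Lemma AMonRev_fin_num : AMonRev P Gamma X \is a fin_num.
Proof.
rewrite ge0_fin_numE ?AMonRev_ge0 //.
apply: le_lt_trans (_ : _ <= \int[P]_w (dominator w)%:E)%E _.
  apply: ge_ereal_sup => _ [s [q qs_adm] <-].
  have /andP[rev_le le_dom] := revenue_normalize_payment qs_adm.
  exact: le_trans rev_le le_dom.
exact: integrable_lty dominator_int.
Qed.

Lemma AMonRev_approx :
  exists (qn : nat -> 'rV[R]_k -> 'rV[R]_k) (sn : nat -> 'rV[R]_k -> R),
  forall n, [/\ amon_admissible Gamma X (qn n) (sn n), sn n 0 = 0 &
    ((fine (AMonRev P Gamma X) - n.+1%:R^-1)%:E <= revenue P X (sn n))%E].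
Proof.
have approx n : exists qs : ('rV[R]_k -> 'rV[R]_k) * ('rV[R]_k -> R),
    [/\ amon_admissible Gamma X qs.1 qs.2, qs.2 0 = 0 &
      ((fine (AMonRev P Gamma X) - n.+1%:R^-1)%:E <= revenue P X qs.2)%E].
  have : ((fine (AMonRev P Gamma X) - n.+1%:R^-1)%:E < AMonRev P Gamma X)%E.
    by rewrite -{2}(fineK AMonRev_fin_num) lte_fin ltrBlDr ltrDl invr_gt0 ltr0n.
  move=> /ereal_sup_gt [_ [s [q qs_adm] <-] lt_rev].
  exists (q, normalize_payment s); split => //=.
  - exact: admissible_normalize_payment.
  - exact: normalize_payment0.
  - have /andP[le_rev _] := revenue_normalize_payment qs_adm.
    exact: le_trans (ltW lt_rev) le_rev.
have [qs qsP] := choice approx.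
by exists (fun n => (qs n).1), (fun n => (qs n).2).
Qed.

Hypothesis Gamma_closed : closed Gamma.
Variables (qn : nat -> 'rV[R]_k -> 'rV[R]_k) (sn : nat -> 'rV[R]_k -> R).
Hypothesis qsn_adm : forall n, amon_admissible Gamma X (qn n) (sn n).
Hypothesis sn0 : forall n, sn n 0 = 0.

Let qn_Gamma n : is_mechanism Gamma (qn n) (sn n). Proof. by case: (qsn_adm n). Qed.
Let qsn_IC n : IC (qn n) (sn n). Proof. by case: (qsn_adm n). Qed.
Let qsn_IR n : IR (qn n) (sn n). Proof. by case: (qsn_adm n). Qed.
Let qn_mono n : alloc_monotonic (qn n). Proof. by case: (qsn_adm n). Qed.

Let sn_ge0 n x : orthant x -> 0 <= sn n x.
Proof. exact (payment_ge0 (qsn_IC n) (qn_mono n) (sn0 n)). Qed.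

Let sn_le n x : orthant x -> sn n x <= B * \sum_(i < k) x ord0 i.
Proof. exact (payment_le Gamma_le (qn_Gamma n) (qsn_IR n)). Qed.

Definition is_dyadic (y : 'rV[R]_k) := exists m z, y = dyadic_point R m z.

Lemma is_dyadic_orthant y : is_dyadic y -> orthant y.
Proof. by move=> [m [z ->]]; apply: orthant_dyadic_point. Qed.

Lemma is_dyadic_ceilv m x : is_dyadic (dyadic_ceilv m x).
Proof. by exists m, (dyadic_index m x). Qed.

Definition dyadic_value (i : (nat * {ffun 'I_k -> nat}) * option 'I_k) n : R :=
  let: ((m, z), c) := i in
  if c is Some c then qn n (dyadic_point R m z) ord0 c else sn n (dyadic_point R m z).

Lemma dyadic_value_bounded i : exists M, forall n, `|dyadic_value i n| <= M.
Proof.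
case: i => [[m z] [c|]] /=; have z0 := orthant_dyadic_point R m z.
  exists B => n; rewrite ger0_norm; last exact: Gamma_orthant (qn_Gamma n z0) c.
  exact: Gamma_le (qn_Gamma n z0) c.
exists (B * \sum_(i < k) dyadic_point R m z ord0 i) => n.
by rewrite ger0_norm ?sn_le ?sn_ge0.
Qed.

Definition diag_subseq : nat -> nat :=
  s2val (cid2 (diagonal_extraction dyadic_value_bounded)).

Lemma diag_subseq_ge n : (n <= diag_subseq n)%N.
Proof. exact: (s2valP (cid2 (diagonal_extraction dyadic_value_bounded))). Qed.

Lemma cvg_dyadic_value i : cvgn (fun n => dyadic_value i (diag_subseq n)).
Proof. exact: (s2valP' (cid2 (diagonal_extraction dyadic_value_bounded))). Qed.

Definition dyadic_alloc (y : 'rV[R]_k) : 'rV[R]_k :=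
  \row_c limn (fun n => qn (diag_subseq n) y ord0 c).
Definition dyadic_pay (y : 'rV[R]_k) : R := limn (fun n => sn (diag_subseq n) y).

Lemma cvg_dyadic_alloc y c : is_dyadic y ->
  (fun n => qn (diag_subseq n) y ord0 c) @ \oo --> dyadic_alloc y ord0 c.
Proof.
by move=> [m [z ->]]; rewrite mxE; have := @cvg_dyadic_value ((m, z), Some c).
Qed.

Lemma cvg_dyadic_pay y : is_dyadic y ->
  (fun n => sn (diag_subseq n) y) @ \oo --> dyadic_pay y.
Proof. by move=> [m [z ->]]; have := @cvg_dyadic_value ((m, z), None). Qed.

Lemma cvg_dyadic_utility y v : is_dyadic y ->
  (fun n => dotv (qn (diag_subseq n) y) v - sn (diag_subseq n) y) @ \oo -->
  dotv (dyadic_alloc y) v - dyadic_pay y.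
Proof.
move=> y_dy; apply: cvgB (cvg_dyadic_pay y_dy).
by apply: (cvg_dotv (b := fun=> v)) => i; [exact: cvg_dyadic_alloc|exact: cvg_cst].
Qed.

Lemma dyadic_alloc_Gamma y : is_dyadic y -> Gamma (dyadic_alloc y).
Proof.
move=> y_dy; apply: (closed_cvg_rV Gamma_closed (v := fun n => qn (diag_subseq n) y)).
  by move=> n; apply/qn_Gamma/is_dyadic_orthant.
by move=> i; apply: cvg_dyadic_alloc.
Qed.

Lemma dyadic_IC y y' : is_dyadic y -> is_dyadic y' ->
  dotv (dyadic_alloc y') y - dyadic_pay y' <= dotv (dyadic_alloc y) y - dyadic_pay y.
Proof.
move=> y_dy y'_dy.
apply: ler_cvgn (cvg_dyadic_utility (v := y) y'_dy) (cvg_dyadic_utility (v := y) y_dy) _.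
by move=> n; apply: qsn_IC; apply: is_dyadic_orthant.
Qed.

Lemma dyadic_IR y : is_dyadic y -> 0 <= dotv (dyadic_alloc y) y - dyadic_pay y.
Proof.
move=> y_dy; apply: ler_cvgn (cvg_cst 0) (cvg_dyadic_utility (v := y) y_dy) _.
by move=> n; apply: qsn_IR; apply: is_dyadic_orthant.
Qed.

Lemma dyadic_alloc_mono y y' : is_dyadic y -> is_dyadic y' -> vle y y' ->
  vle (dyadic_alloc y) (dyadic_alloc y').
Proof.
move=> y_dy y'_dy yy' c.
apply: ler_cvgn (cvg_dyadic_alloc (c := c) y_dy) (cvg_dyadic_alloc (c := c) y'_dy) _ => n.
by apply: qn_mono => //; apply: is_dyadic_orthant.
Qed.

Lemma dyadic_pay_mono y y' : is_dyadic y -> is_dyadic y' -> vle y y' ->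
  dyadic_pay y <= dyadic_pay y'.
Proof.
move=> y_dy y'_dy yy'; apply: ler_cvgn (cvg_dyadic_pay y_dy) (cvg_dyadic_pay y'_dy) _ => n.
by apply: payment_mono (qsn_IC _) (qn_mono _) _ _ yy'; apply: is_dyadic_orthant.
Qed.

Lemma dyadic_pay_ge0 y : is_dyadic y -> 0 <= dyadic_pay y.
Proof.
move=> y_dy; apply: ler_cvgn (cvg_cst 0) (cvg_dyadic_pay y_dy) _ => n.
by apply/sn_ge0/is_dyadic_orthant.
Qed.

Lemma dyadic_pay_le y : is_dyadic y -> dyadic_pay y <= B * \sum_(i < k) y ord0 i.
Proof.
move=> y_dy; apply: ler_cvgn (cvg_dyadic_pay y_dy) (cvg_cst _) _ => n.
by apply/sn_le/is_dyadic_orthant.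
Qed.

Definition lim_alloc (x : 'rV[R]_k) : 'rV[R]_k :=
  \row_c limn (fun m => dyadic_alloc (dyadic_ceilv m x) ord0 c).
Definition lim_pay (x : 'rV[R]_k) : R := limn (fun m => dyadic_pay (dyadic_ceilv m x)).

Lemma cvg_lim_alloc x c : orthant x ->
  (fun m => dyadic_alloc (dyadic_ceilv m x) ord0 c) @ \oo --> lim_alloc x ord0 c.
Proof.
move=> x0; rewrite mxE; apply: nonincreasing_is_cvgn.
  move=> m n mn; apply: dyadic_alloc_mono (dyadic_ceilv_nonincr x0 mn) c;
  exact: is_dyadic_ceilv.
exists 0 => _ [m _ <-].
exact: Gamma_orthant (dyadic_alloc_Gamma (is_dyadic_ceilv m x)) c.
Qed.

Lemma cvg_lim_pay x : orthant x ->
  (fun m => dyadic_pay (dyadic_ceilv m x)) @ \oo --> lim_pay x.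
Proof.
move=> x0; apply: nonincreasing_is_cvgn.
  move=> m n mn; apply: dyadic_pay_mono (dyadic_ceilv_nonincr x0 mn);
  exact: is_dyadic_ceilv.
by exists 0 => _ [m _ <-]; apply/dyadic_pay_ge0/is_dyadic_ceilv.
Qed.

Let cvg_lim_utility x y : orthant x -> orthant y ->
  (fun m => dotv (dyadic_alloc (dyadic_ceilv m y)) (dyadic_ceilv m x)
            - dyadic_pay (dyadic_ceilv m y))
    @ \oo --> dotv (lim_alloc y) x - lim_pay y.
Proof.
move=> x0 y0; apply: cvgB (cvg_lim_pay y0).
by apply: cvg_dotv => i; [exact: cvg_lim_alloc|exact: cvg_dyadic_ceilv].
Qed.

Lemma lim_alloc_Gamma : is_mechanism Gamma lim_alloc lim_pay.
Proof.
move=> x x0.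
apply: (closed_cvg_rV Gamma_closed (v := fun m => dyadic_alloc (dyadic_ceilv m x))).
  by move=> m; apply/dyadic_alloc_Gamma/is_dyadic_ceilv.
by move=> i; apply: cvg_lim_alloc.
Qed.

Lemma lim_IC : IC lim_alloc lim_pay.
Proof.
move=> x y x0 y0; apply: ler_cvgn (cvg_lim_utility x0 y0) (cvg_lim_utility x0 x0) _ => m.
by apply: dyadic_IC; apply: is_dyadic_ceilv.
Qed.

Lemma lim_IR : IR lim_alloc lim_pay.
Proof.
move=> x x0; apply: ler_cvgn (cvg_cst 0) (cvg_lim_utility x0 x0) _ => m.
by apply/dyadic_IR/is_dyadic_ceilv.
Qed.

Lemma lim_alloc_mono : alloc_monotonic lim_alloc.
Proof.
move=> x y x0 y0 xy c.
apply: ler_cvgn (cvg_lim_alloc (c := c) x0) (cvg_lim_alloc (c := c) y0) _ => m.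
by apply: dyadic_alloc_mono (dyadic_ceilv_homo m x0 xy) c; apply: is_dyadic_ceilv.
Qed.

Let measurable_fun_dyadic (h : 'rV[R]_k -> R) m :
  measurable_fun setT (fun w => h (dyadic_ceilv m (X w))).
Proof. exact: measurable_fun_dyadic_index m (fun z => h (dyadic_point R m z)) mX X0. Qed.

Lemma measurable_fun_lim_pay : measurable_fun setT (fun w => lim_pay (X w)).
Proof.
apply: (measurable_fun_cvg (h := fun m w => dyadic_pay (dyadic_ceilv m (X w)))).
  by move=> m; apply: measurable_fun_dyadic.
by move=> w _; apply: cvg_lim_pay.
Qed.

Lemma lim_mechanism_admissible : amon_admissible Gamma X lim_alloc lim_pay.
Proof.
split; [exact: lim_alloc_Gamma|exact: lim_IC|exact: lim_IR|exact: lim_alloc_mono|].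
exact: measurable_fun_lim_pay.
Qed.

Let dominated_at_dyadic_ceilv (u : 'rV[R]_k -> R) m w :
  (forall y, is_dyadic y -> u y <= B * \sum_(i < k) y ord0 i) ->
  u (dyadic_ceilv m (X w)) <= dominator w.
Proof.
move=> u_le; apply: le_trans (u_le _ (is_dyadic_ceilv m _)) _.
rewrite /dominator ler_wpM2l //; apply: ler_sum => i _.
by rewrite dyadic_ceilvE; apply: dyadic_ceil_le1 (X0 w i).
Qed.

Variable m0 : R.
Hypothesis revenue_sn : forall n, ((m0 - n.+1%:R^-1)%:E <= revenue P X (sn n))%E.

Lemma dyadic_revenue_ge m : (m0%:E <= \int[P]_w (dyadic_pay (dyadic_ceilv m (X w)))%:E)%E.
Proof.
apply: (le_integral_dominated_cvg (c := fun n => m0 - n.+1%:R^-1)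
  (F := fun n w => sn (diag_subseq n) (dyadic_ceilv m (X w))) (g := dominator)).
- by move=> n; apply: measurable_fun_dyadic.
- by move=> w; apply/cvg_dyadic_pay/is_dyadic_ceilv.
- exact: dominator_int.
- move=> n w; apply/andP; split; first exact/sn_ge0/is_dyadic_orthant/is_dyadic_ceilv.
  by apply: dominated_at_dyadic_ceilv => y /is_dyadic_orthant; apply: sn_le.
- move=> n; apply: le_trans (_ : _ <= (m0 - (diag_subseq n).+1%:R^-1)%:E)%E
    (le_trans (revenue_sn _) _).
    by rewrite lee_fin lerD2l lerN2 lef_pV2 ?posrE // ler_nat ltnS diag_subseq_ge.
  rewrite /revenue; apply: ge0_le_integral => //.
  + by move=> w _; rewrite lee_fin sn_ge0.
  + by apply/measurable_EFinP; case: (qsn_adm (diag_subseq n)).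
  + by apply/measurable_EFinP; apply: measurable_fun_dyadic.
  + move=> w _; rewrite lee_fin; apply: payment_mono (qsn_IC _) (qn_mono _) _ _ _ => //.
      by apply/is_dyadic_orthant/is_dyadic_ceilv.
    exact: vle_dyadic_ceilv.
- by rewrite -[X in _ --> X]subr0; apply: cvgB (cvg_cst _) cvg_harmonic.
Qed.

Lemma lim_revenue_ge : (m0%:E <= revenue P X lim_pay)%E.
Proof.
apply: (le_integral_dominated_cvg (c := fun=> m0)
  (F := fun m w => dyadic_pay (dyadic_ceilv m (X w))) (g := dominator)).
- by move=> m; apply: measurable_fun_dyadic.
- by move=> w; apply: cvg_lim_pay.
- exact: dominator_int.
- move=> m w; apply/andP; split; first exact/dyadic_pay_ge0/is_dyadic_ceilv.
  by apply: dominated_at_dyadic_ceilv => y; apply: dyadic_pay_le.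
- exact: dyadic_revenue_ge.
- exact: cvg_cst.
Qed.

Lemma exists_admissible_revenue_ge :
  exists q s, amon_admissible Gamma X q s /\ (m0%:E <= revenue P X s)%E.
Proof.
by exists lim_alloc, lim_pay; split; [exact: lim_mechanism_admissible|exact: lim_revenue_ge].
Qed.

End optimal_mechanism.



Theorem theorem3 (R : realType) (k : nat) (hk : (0 < k)%N)
  (Gamma : set 'rV[R]_k)
  (hGc : compact Gamma) (hGne : Gamma !=set0) (hGpos : Gamma `<=` orthant (k:=k))
  (d : measure_display) (Omega : measurableType d) (P : probability Omega R)
  (X : Omega -> 'rV[R]_k)
  (hXmeas : forall i : 'I_k, measurable_fun setT (fun w => X w ord0 i))
  (hXpos : forall w, orthant (X w))
  (hXint : (\int[P]_w (`|X w|)%:E < +oo)%E) :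
  exists (q : 'rV[R]_k -> 'rV[R]_k) (s : 'rV[R]_k -> R),
    amon_admissible Gamma X q s /\ revenue P X s = AMonRev P Gamma X.
Proof.
have Gamma_closed : closed Gamma by apply: compact_closed => //; exact: norm_hausdorff.
have [B B0 Gamma_le] := compact_coord_bounded hGc.
have AMonRev_fin := AMonRev_fin_num hGpos B0 Gamma_le hXmeas hXpos hXint hGne.
have [qn [sn qsn]] := AMonRev_approx hGpos B0 Gamma_le hXmeas hXpos hXint hGne.
have qsn_adm n : amon_admissible Gamma X (qn n) (sn n) by case: (qsn n).
have sn0 n : sn n 0 = 0 by case: (qsn n).
have revenue_sn n : ((fine (AMonRev P Gamma X) - n.+1%:R^-1)%:E <= revenue P X (sn n))%E.
  by case: (qsn n).
have [q [s [qs_adm revenue_ge]]] := exists_admissible_revenue_ge hGpos B0 Gamma_le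
  hXmeas hXpos hXint Gamma_closed qsn_adm sn0 revenue_sn.
exists q, s; split => //; apply/eqP; rewrite eq_le; apply/andP; split.
  by apply: ereal_sup_ubound; exists s => //; exists q.
by rewrite -(fineK AMonRev_fin).
Qed.
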